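(* Let $X=\{x_1,\ldots,x_n\}$, $S=K[x_1,\ldots,x_n]$ over a field $K$, and let $F_1,\ldots,F_s\subset X$ be pairwise disjoint with $|F_i|=k>1$ for all $i$. Let $f_1,\ldots,f_{k^s}$ be the minimal monomial generators of $P_{F_1}\cdots P_{F_s}$, ordered (decreasingly) with respect to the lexicographic order with $x_1>x_2>\cdots>x_n$. For $i=2,\ldots,k^s$ let $n_i$ be the minimal number of homogeneous generators of $(f_1,\ldots,f_{i-1}):(f_i)$. Then $$\max\{n_i:i=2,\ldots,k^s\}=n_{k^s}=(k-1)s.$$ Moreover, for all $i$, the colon ideal $(f_1,\ldots,f_{i-1}):(f_i)$ is generated by linear forms.
   Context: For $F\subseteq X$, $P_F=(x_i:x_i\in F)\subset S$. *)

From HB Require Import structures.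
From mathcomp Require Import all_boot all_order all_algebra.
From mathcomp.multinomials Require Import mpoly.
Set Implicit Arguments. Unset Strict Implicit. Unset Printing Implicit Defensive.
Import GRing.Theory.
Local Open Scope ring_scope.

Section Ideals.
Variables (K : fieldType) (n : nat).
Local Notation S := {mpoly K[n]}.

Definition in_ideal (gs : seq S) (p : S) : Prop :=
  exists cs : seq S, size cs = size gs /\
    p = \sum_(j < size gs) cs`_j * gs`_j.

Definition gen_ideal (G : S -> Prop) (p : S) : Prop :=
  exists gs : seq S, (forall g, g \in gs -> G g) /\ in_ideal gs p.

Definition generates (gs : seq S) (I : S -> Prop) : Prop :=
  forall p, I p <-> in_ideal gs p.

Definition colon (I : S -> Prop) (f : S) (p : S) : Prop := I (p * f).

Definition homogeneous (p : S) : Prop := exists d : nat, p \is d.-homog.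

Definition min_num_homog_gens (I : S -> Prop) (m : nat) : Prop :=
  (exists gs : seq S, size gs = m /\ (forall g, g \in gs -> homogeneous g)
                      /\ generates gs I) /\
  (forall gs : seq S, (forall g, g \in gs -> homogeneous g) ->
                      generates gs I -> (m <= size gs)%N).

Definition gen_by_linear_forms (I : S -> Prop) : Prop :=
  exists gs : seq S, (forall g, g \in gs -> g \is 1.-homog) /\ generates gs I.

Definition PF (F : {set 'I_n}) : S -> Prop :=
  gen_ideal (fun p => exists2 i, i \in F & p = 'X_i).

Definition prod_ideal (s : nat) (I : 'I_s -> S -> Prop) : S -> Prop :=
  gen_ideal (fun p => exists g : 'I_s -> S,
                (forall i, I i (g i)) /\ p = \prod_(i < s) g i).

Definition mdivides (m1 m2 : 'X_{1..n}) : bool := [forall i, m1 i <= m2 i]%N.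

Definition min_monomial_gen (I : S -> Prop) (m : 'X_{1..n}) : Prop :=
  I 'X_[m] /\ (forall m' : 'X_{1..n}, I 'X_[m'] -> mdivides m' m -> m' = m).

(* Strict lexicographic order with x_1 > x_2 > ... > x_n
   (variable index 0 is the largest): lex_gt m1 m2 <=> x^m1 >_lex x^m2. *)
Definition lex_gt (m1 m2 : 'X_{1..n}) : bool :=
  [exists i : 'I_n, (m2 i < m1 i)%N &&
     [forall j : 'I_n, (j < i)%N ==> (m1 j == m2 j)]].

End Ideals.

(* The minimal generators of P_{F_1}...P_{F_s} are the k^s monomials
   x_{a_1}...x_{a_s} with a_i in F_i.  For such a generator f, a lex-earlier
   generator divides f*u exactly when u is divisible by a variable x_j with j in
   some F_i and x_j >_lex x_{a_i}: exchanging a_i for such a j gives an earlier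
   generator, and conversely the first variable at which an earlier generator
   exceeds f is of this kind.  So each colon ideal (f_1,...,f_{i-1}) : (f_i) is
   generated by at most sum_i (|F_i| - 1) = (k-1)s variables, with equality for
   the lex-last generator, in which every a_i is the lex-smallest variable of F_i.
   An ideal generated by d variables needs d generators, since the linear parts
   of any generating set must span the space of these variables. *)

From HB Require Import structures.
From mathcomp Require Import all_boot all_order all_algebra.
From mathcomp.multinomials Require Import mpoly.
Set Implicit Arguments. Unset Strict Implicit. Unset Printing Implicit Defensive.
Import GRing.Theory.

Section SortedStrict.
Variables (T : eqType) (x0 : T) (r : rel T).
Hypotheses (r_trans : transitive r) (r_irr : irreflexive r).

Lemma sorted_nth_rel_ltn s p q : sorted r s -> p < size s -> q < size s ->
  r (nth x0 s p) (nth x0 s q) -> p < q.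
Proof.
move=> s_sorted lt_ps lt_qs r_pq; case: ltngtP => // [lt_qp | eq_pq].
  have r_qp : r (nth x0 s q) (nth x0 s p) by apply: sorted_ltn_nth.
  by rewrite -(r_irr (nth x0 s p)) (r_trans r_pq r_qp).
by rewrite eq_pq r_irr in r_pq.
Qed.

Lemma mem_take_sorted s p x : sorted r s -> p < size s ->
  (x \in take p s) = (x \in s) && r x (nth x0 s p).
Proof.
move=> s_sorted lt_ps; apply/idP/andP => [x_in | [/(nthP x0) [q lt_qs <-] r_qp]].
  split; first exact: mem_take x_in.
  have /(nthP x0) [q] := x_in; rewrite size_take lt_ps => lt_qp <-.
  rewrite nth_take //; apply: sorted_ltn_nth => //; rewrite inE //.
  exact: ltn_trans lt_qp lt_ps.
have lt_qp := sorted_nth_rel_ltn s_sorted lt_qs lt_ps r_qp.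
by rewrite -(nth_take x0 lt_qp) mem_nth // size_take lt_ps.
Qed.

End SortedStrict.

Lemma card_family_const (n s k : nat) (F : 'I_s -> {set 'I_n}) :
  (forall i, #|F i| = k) -> #|family F| = (k ^ s)%N.
Proof.
move=> card_F; rewrite card_family foldrE big_map big_enum /=.
by under eq_bigr do rewrite card_F; rewrite prod_nat_const card_ord.
Qed.

Section LexOrder.
Variable n : nat.
Implicit Types m : 'X_{1..n}.

Lemma lex_gt_irr : irreflexive (@lex_gt n).
Proof. by move=> m; apply/existsP => -[i /andP[]]; rewrite ltnn. Qed.

Lemma lex_gt_trans : transitive (@lex_gt n).
Proof.
move=> m2 m1 m3 /existsP [i /andP [lt_i /forallP eq_i]] /existsP [j /andP [lt_j /forallP eq_j]].
have e12 (l : 'I_n) : l < i -> m1 l = m2 l by move=> lt_l; apply/eqP/(implyP (eq_i l)).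
have e23 (l : 'I_n) : l < j -> m2 l = m3 l by move=> lt_l; apply/eqP/(implyP (eq_j l)).
apply/existsP; case: (ltngtP i j) => [lt_ij | lt_ji | /val_inj eq_ij].
- exists i; rewrite -(e23 _ lt_ij) lt_i /=; apply/forallP => l; apply/implyP => lt_l.
  by rewrite e12 // e23 // (ltn_trans lt_l lt_ij).
- exists j; rewrite (e12 _ lt_ji) lt_j /=; apply/forallP => l; apply/implyP => lt_l.
  by rewrite e12 ?e23 // (ltn_trans lt_l lt_ji).
- exists i; rewrite (ltn_trans _ lt_i) /=; last by rewrite eq_ij.
  apply/forallP => l; apply/implyP => lt_l.
  by rewrite e12 // e23 // -eq_ij.
Qed.

End LexOrder.

Section IdealMembership.
Variables (K : fieldType) (n : nat).
Local Notation S := {mpoly K[n]}.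
Local Open Scope ring_scope.
Implicit Types (p q c g : S) (gs : seq S).

Lemma in_ideal0 gs : in_ideal gs 0.
Proof.
exists (nseq (size gs) 0); rewrite size_nseq; split=> //.
by rewrite big1 // => j _; rewrite nth_nseq if_same mul0r.
Qed.

Lemma in_idealD gs p q : in_ideal gs p -> in_ideal gs q -> in_ideal gs (p + q).
Proof.
move=> [cp [_ ->]] [cq [_ ->]].
exists (mkseq (fun j => cp`_j + cq`_j) (size gs)); rewrite size_mkseq; split=> //.
by rewrite -big_split; apply: eq_bigr => j _; rewrite nth_mkseq // mulrDl.
Qed.

Lemma in_idealMl gs c p : in_ideal gs p -> in_ideal gs (c * p).
Proof.
move=> [cp [_ ->]].
exists (mkseq (fun j => c * cp`_j) (size gs)); rewrite size_mkseq; split=> //.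
by rewrite mulr_sumr; apply: eq_bigr => j _; rewrite nth_mkseq // mulrA.
Qed.

Lemma in_ideal_mem gs g : g \in gs -> in_ideal gs g.
Proof.
move=> gs_g; have ltg : (index g gs < size gs)%N by rewrite index_mem.
exists (mkseq (fun j => (j == index g gs)%:R) (size gs)); rewrite size_mkseq.
split=> //; rewrite (bigD1 (Ordinal ltg)) //= big1 => [|j /negbTE j_ne].
  by rewrite nth_mkseq // eqxx mul1r addr0 nth_index.
by rewrite nth_mkseq // -[index g gs]/(val (Ordinal ltg)) val_eqE j_ne mul0r.
Qed.

Definition up_closed (P : pred 'X_{1..n}) := forall m m', P m -> P (m' + m)%MM.

Lemma all_msuppMl P c p :
  up_closed P -> all P (msupp p) -> all P (msupp (c * p)).
Proof.
move=> upP /allP Pp; apply/allP => m /msuppM_le /allpairsP [[m1 m2] [_ /Pp Pm2 ->]].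
exact: upP.
Qed.

Lemma all_msupp_in_ideal P gs p : up_closed P ->
  all (fun g => all P (msupp g)) gs -> in_ideal gs p -> all P (msupp p).
Proof.
move=> upP /allP Pgs [cs [_ ->]].
apply: (big_ind (fun q => all P (msupp q))) => [|q r Pq Pr|j _].
- by rewrite msupp0.
- apply/allP => m /msuppD_le; rewrite mem_cat => /orP[] m_in.
    exact: (allP Pq).
  exact: (allP Pr).
- exact/all_msuppMl/Pgs/mem_nth.
Qed.

Lemma in_monomial_idealP (I : eqType) (r : seq I) (u : I -> 'X_{1..n}) p :
  reflect (in_ideal [seq 'X_[u j] | j <- r] p)
          (all (fun m => has (fun j => u j <= m)%MM r) (msupp p)).
Proof.
apply: (iffP idP) => [divP | /all_msupp_in_ideal -> //].
- rewrite (mpolyE p) big_seq; apply: big_ind => [||m /(allP divP) /hasP [j rj le_um]].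
  + exact: in_ideal0.
  + exact: in_idealD.
  rewrite -(submK le_um) mpolyXD -mul_mpolyC mulrA.
  by apply/in_idealMl/in_ideal_mem/map_f.
- move=> m m' /hasP [j rj le_um]; apply/hasP; exists j => //.
  exact: lepm_trans le_um (lem_addl _ _).
- apply/allP => _ /mapP [j rj ->]; rewrite msuppX /= andbT.
  by apply/hasP; exists j => //; apply: lepm_refl.
Qed.

Lemma generates_colon_monomial (I J : eqType) (r : seq I) (u : I -> 'X_{1..n})
    (r' : seq J) (v : J -> 'X_{1..n}) w :
  (forall m, has (fun i => u i <= w + m)%MM r = has (fun j => v j <= m)%MM r') ->
  generates [seq 'X_[v j] : S | j <- r'] (colon (in_ideal [seq 'X_[u i] | i <- r]) 'X_[w]).
Proof.
move=> eq_has p; rewrite /colon.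
have eq_supp : all (fun m => has (fun i => u i <= m)%MM r) (msupp (p * 'X_[w])) =
               all (fun m => has (fun j => v j <= m)%MM r') (msupp p).
  by rewrite (perm_all _ (msuppMX p w)) all_map; apply: eq_all => m; rewrite /= eq_has.
by split=> /in_monomial_idealP divP; apply/in_monomial_idealP;
  [rewrite -eq_supp | rewrite eq_supp].
Qed.

End IdealMembership.

Section VariableIdeals.
Variables (K : fieldType) (n : nat).
Local Notation S := {mpoly K[n]}.
Local Open Scope ring_scope.
Implicit Types (c g : S) (gs : seq S) (l : 'I_n) (m : 'X_{1..n}).

Lemma addm_eq_mnm1 l m m' : U_(l)%MM = (m + m')%MM -> m = 0%MM \/ m' = 0%MM.
Proof.
move/(congr1 mdeg); rewrite mdeg1 mdegD => deg1.
have [/eqP|] := boolP (m == 0%MM); first by left.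
rewrite -mdeg_eq0 => m_nz; right; apply/eqP; rewrite -mdeg_eq0; move: m_nz deg1.
by case: (mdeg m) => [|[|?]] //; case: (mdeg m').
Qed.

Lemma mcoeffMX_mnm1 c m l :
  m != 0%MM -> (c * 'X_[m])@_U_(l) = c@_0%MM * (m == U_(l)%MM)%:R.
Proof.
move=> m_nz; have [->|m_ne] := eqVneq m U_(l)%MM.
  by rewrite mulr1 -[X in _@_X]addm0 mcoeffMX.
rewrite mulr0; apply: memN_msupp_eq0; rewrite (perm_mem (msuppMX _ _)).
apply/mapP => -[m' _ eq_l]; have [m0|m'0] := addm_eq_mnm1 eq_l.
  by move: m_nz; rewrite m0 eqxx.
by move: m_ne; rewrite eq_l m'0 addm0 eqxx.
Qed.

Lemma mcoeffM_mnm1 c g l : g@_0%MM = 0 -> (c * g)@_U_(l) = c@_0%MM * g@_U_(l).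
Proof.
move=> g0; rewrite [in LHS](mpolyE g) [in RHS](mpolyE g).
rewrite mulr_sumr !raddf_sum mulr_sumr /=.
rewrite !big_seq; apply: eq_bigr => m supp_m.
have m_nz : m != 0%MM by apply: contraTneq supp_m => ->; rewrite mcoeff_msupp g0 eqxx.
by rewrite -scalerAr !mcoeffZ mcoeffMX_mnm1 // mcoeffX mulrCA.
Qed.

Lemma card_vars_le_generators (V : {set 'I_n}) gs :
  generates gs (in_ideal [seq 'X_j : S | j <- enum V]) -> (#|V| <= size gs)%N.
Proof.
move=> gen_gs.
have gs0 g : g \in gs -> g@_0%MM = 0.
  move=> /in_ideal_mem /gen_gs /(in_monomial_idealP _ (fun j => U_(j)%MM)) /allP supp_g.
  apply: memN_msupp_eq0; apply/negP => /supp_g /hasP [j _].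
  by rewrite lep1mP mnm0E eqxx.
have coefs (j : 'I_#|V|) : exists cs : seq S, size cs = size gs /\
    'X_(enum_val j) = \sum_(t < size gs) cs`_t * gs`_t.
  by apply/gen_gs/in_ideal_mem/map_f; rewrite mem_enum enum_valP.
have [cs cs_spec] := fin_all_exists coefs.
pose A := \matrix_(j < #|V|, t < size gs) ((cs j)`_t)@_0%MM.
pose B := \matrix_(t < size gs, j < #|V|) (gs`_t)@_(U_(enum_val j)).
(* Constant terms of the coefficients times linear parts of [gs] give back each variable. *)
have AB1 : A *m B = 1%:M.
  apply/matrixP => j j'; rewrite !mxE.
  transitivity (('X_(enum_val j) : S)@_(U_(enum_val j'))).
    rewrite (proj2 (cs_spec j)) raddf_sum; apply: eq_bigr => t _.
    by rewrite !mxE /= mcoeffM_mnm1 // gs0 // mem_nth.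
  by rewrite mcoeffXU (inj_eq enum_val_inj).
have := mxrankM_maxl A B; rewrite AB1 mxrank1 => /leq_trans; apply.
exact: rank_leq_col.
Qed.

Lemma vars_dhomog1 (r : seq 'I_n) g : g \in [seq 'X_j : S | j <- r] -> g \is 1.-homog.
Proof. by move=> /mapP [j _ ->]; rewrite dhomogX /= mdeg1. Qed.

Lemma min_num_homog_gens_vars (V : {set 'I_n}) (I : S -> Prop) :
  generates [seq 'X_j : S | j <- enum V] I -> min_num_homog_gens I #|V|.
Proof.
move=> gen_V; split.
  exists [seq 'X_j | j <- enum V]; rewrite size_map -cardE; split=> //.
  by split=> // g /vars_dhomog1; exists 1%N.
move=> gs _ gen_gs; apply: card_vars_le_generators => p.
by rewrite -gen_V gen_gs.
Qed.

End VariableIdeals.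

Definition meets n (A : {set 'I_n}) : pred 'X_{1..n} :=
  [pred m : 'X_{1..n} | [exists j in A, m j != 0]].

Section Selections.
Variables (n s : nat) (F : 'I_s -> {set 'I_n}).
Hypothesis F_disjoint : forall i j, i != j -> [disjoint F i & F j].
Implicit Types (a b : 'I_s -> 'I_n) (m : 'X_{1..n}).

Definition selects a := forall i, a i \in F i.

Definition sel_mnm a : 'X_{1..n} := (\sum_(i < s) U_(a i))%MM.

Definition meets_blocks m := [forall i, meets (F i) m].

(* [j < a i] means x_j >_lex x_(a i): index 0 is the largest variable. *)
Definition colon_vars a := [set j | [exists i, (j \in F i) && (j < a i)]].

Lemma block_uniq i i' j : j \in F i -> j \in F i' -> i = i'.
Proof.
move=> Fij Fi'j; apply/eqP/negPn/negP => /F_disjoint dis.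
by rewrite (disjointFr dis Fij) in Fi'j.
Qed.

Lemma sel_mnmE a j : selects a -> sel_mnm a j = [exists i, a i == j].
Proof.
move=> sa; rewrite /sel_mnm mnm_sumE; case: existsP => [[i /eqP aij] | no_i].
  rewrite (bigD1 i) //= mnm1E aij eqxx big1 // => i' ne_i'.
  rewrite mnm1E; case: eqP => // ai'j.
  by case/negP: ne_i'; apply/eqP/(block_uniq (sa i')); rewrite ai'j -aij.
by rewrite big1 // => i _; rewrite mnm1E; case: eqP => // aij; case: no_i; exists i; apply/eqP.
Qed.

Lemma sel_mnm_block a i j : selects a -> j \in F i -> sel_mnm a j = (a i == j).
Proof.
move=> sa Fij; rewrite sel_mnmE //; congr nat_of_bool; apply/existsP/eqP => [[i' /eqP ai'j]|<-].
  by have <- : i' = i by apply: block_uniq (sa i') _; rewrite ai'j.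
by exists i.
Qed.

Lemma sel_mnm_sel a i : selects a -> sel_mnm a (a i) = 1.
Proof. by move=> sa; rewrite (sel_mnm_block sa (sa i)) eqxx. Qed.

Lemma sel_mnm_le_eq a b : selects a -> selects b -> (sel_mnm b <= sel_mnm a)%MM -> b =1 a.
Proof.
move=> sa sb /mnm_lepP le_ba i; have := le_ba (b i).
by rewrite sel_mnm_sel // (sel_mnm_block sa (sb i)); case: eqP.
Qed.

Lemma meets_blocks_sel a : selects a -> meets_blocks (sel_mnm a).
Proof. by move=> sa; apply/forallP => i; apply/existsP; exists (a i); rewrite sa sel_mnm_sel. Qed.

Lemma meets_blocks_sel_le m : meets_blocks m -> exists2 a, selects a & (sel_mnm a <= m)%MM.
Proof.
move=> /forallP meets_m; have [a a_spec] := fin_all_exists (fun i => existsP (meets_m i)).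
have sa : selects a by move=> i; case/andP: (a_spec i).
exists a => //; apply/mnm_lepP => j; rewrite sel_mnmE //.
by case: existsP => [[i /eqP <-]|] //=; rewrite lt0n; case/andP: (a_spec i).
Qed.

Lemma meets_blocks_le_sel a m :
  selects a -> meets_blocks m -> (m <= sel_mnm a)%MM -> m = sel_mnm a.
Proof.
move=> sa /meets_blocks_sel_le [b sb le_bm] le_ma.
have eq_ba := sel_mnm_le_eq sa sb (lepm_trans le_bm le_ma).
have eq_sel : sel_mnm b = sel_mnm a by apply: eq_bigr => i _; rewrite eq_ba.
apply/mnmP => j; apply/eqP.
by rewrite eqn_leq (mnm_lepP le_ma j) -eq_sel (mnm_lepP le_bm j).
Qed.

Lemma lex_gt_sel_mnm a b i0 : selects a -> selects b ->
  (forall i, i != i0 -> b i = a i) -> b i0 < a i0 -> lex_gt (sel_mnm b) (sel_mnm a).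
Proof.
move=> sa sb eq_ba lt_i0; apply/existsP; exists (b i0).
rewrite sel_mnm_sel // (sel_mnm_block sa (sb i0)) -val_eqE gtn_eqF //=.
apply/forallP => l; apply/implyP => lt_l; rewrite !sel_mnmE //.
apply/eqP; congr nat_of_bool; apply: eq_existsb => i.
have [-> | /eq_ba -> //] := eqVneq i i0.
by rewrite -!val_eqE !gtn_eqF // (ltn_trans lt_l).
Qed.

Lemma lex_gt_sel_mnm_colon_vars a b : selects a -> selects b ->
  lex_gt (sel_mnm b) (sel_mnm a) -> exists2 l, l \in colon_vars a & sel_mnm a l < sel_mnm b l.
Proof.
move=> sa sb /existsP [l /andP [lt_l /forallP eq_below]]; exists l => //.
(* [l] is some [b i0]; were [a i0 < l], the monomials would already differ at [a i0]. *)
have [i0 /eqP bl] : exists i0, b i0 == l.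
  by apply/existsP; move: lt_l; rewrite (sel_mnmE _ sb); case: existsP.
subst l; move: lt_l; rewrite sel_mnm_sel // (sel_mnm_block sa (sb i0)) ltnS leqn0 eqb0 => ne_ab.
rewrite inE; apply/existsP; exists i0; rewrite sb /=.
case: ltngtP => // [lt_ab | /val_inj eq_ab]; last by rewrite eq_ab eqxx in ne_ab.
have := implyP (eq_below (a i0)) lt_ab.
by rewrite sel_mnm_sel // (sel_mnm_block sb (sa i0)) (eq_sym (b i0)) (negbTE ne_ab).
Qed.

Lemma colon_varsP a m : selects a ->
  (exists2 b, selects b & lex_gt (sel_mnm b) (sel_mnm a) && (sel_mnm b <= sel_mnm a + m)%MM)
  <-> exists2 l, l \in colon_vars a & m l != 0.
Proof.
move=> sa; split=> [[b sb /andP [lt_ba /mnm_lepP le_b]] | [l]].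
  have [l Vl lt_l] := lex_gt_sel_mnm_colon_vars sa sb lt_ba; exists l => //.
  by have := leq_trans lt_l (le_b l); rewrite mnmDE -{1}[sel_mnm a l]addn0 ltn_add2l lt0n.
rewrite inE => /existsP [i0 /andP [Fl lt_l]] ml.
pose b := [eta a with i0 |-> l].
have sb : selects b by move=> i; rewrite /b /=; case: eqP => [->|].
have lt_ba : lex_gt (sel_mnm b) (sel_mnm a).
  apply: (lex_gt_sel_mnm (i0 := i0)) => //; last by rewrite /b /= eqxx.
  by move=> i /negbTE; rewrite /b /= => ->.
exists b => //; rewrite lt_ba /=.
apply/mnm_lepP => j; rewrite mnmDE !sel_mnmE //.
case: existsP => [[i]|] //=; rewrite /b /=; case: (i =P i0) => [_ /eqP <- | _ /eqP aij].
  by rewrite ltn_addl // lt0n.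
by case: existsP => [//|]; case; exists i; rewrite aij.
Qed.

Lemma colon_vars_sub a : colon_vars a \subset \bigcup_i (F i :\ a i).
Proof.
apply/subsetP => j; rewrite inE => /existsP [i /andP [Fij lt_j]].
by apply/bigcupP; exists i; rewrite // !inE Fij andbT -val_eqE ltn_eqF.
Qed.

Lemma colon_vars_lex_min a : selects a ->
  (forall b, selects b -> ~~ lex_gt (sel_mnm a) (sel_mnm b)) ->
  colon_vars a = \bigcup_i (F i :\ a i).
Proof.
move=> sa a_min; apply/eqP; rewrite eqEsubset colon_vars_sub /=.
apply/subsetP => j /bigcupP [i0 _]; rewrite !inE => /andP [ne_j Fj].
apply/existsP; exists i0; rewrite Fj /=; case: ltngtP => // [lt_aj | /val_inj eq_j].
  pose b := [eta a with i0 |-> j].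
  have sb : selects b by move=> i; rewrite /b /=; case: eqP => [->|].
  case/negP: (a_min b sb); apply: (lex_gt_sel_mnm (i0 := i0)) => //.
    by move=> i /negbTE; rewrite /b /= => ->.
  by rewrite /b /= eqxx.
by rewrite eq_j eqxx in ne_j.
Qed.

Lemma card_bigcup_blocksD1 k a : (forall i, #|F i| = k) -> selects a ->
  #|\bigcup_i (F i :\ a i)| = ((k - 1) * s)%N.
Proof.
move=> card_F sa; rewrite -sum1_card partition_disjoint_bigcup; last first.
  by move=> i j /F_disjoint; apply: disjointW; apply: subsetDl.
rewrite (eq_bigr (fun _ => k - 1)%N) ?sum_nat_const ?card_ord 1?mulnC // => i _.
by rewrite sum1_card; move: (cardsD1 (a i) (F i)); rewrite sa card_F add1n => ->; rewrite subn1.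
Qed.

End Selections.

Section ProductIdeal.
Variables (K : fieldType) (n s : nat) (F : 'I_s -> {set 'I_n}).
Hypothesis F_disjoint : forall i j, i != j -> [disjoint F i & F j].
Local Notation S := {mpoly K[n]}.
Local Open Scope ring_scope.
Local Notation I := (prod_ideal (fun i => @PF K n (F i))).

Lemma up_closed_meets (A : {set 'I_n}) : up_closed (meets A).
Proof.
move=> m m' /existsP [j /andP [Aj mj]]; apply/existsP; exists j.
by rewrite Aj mnmDE addn_eq0 negb_and mj orbT.
Qed.

Lemma all_msupp_PF (A : {set 'I_n}) (p : S) : PF A p -> all (meets A) (msupp p).
Proof.
move=> [gs [gs_vars p_in]]; apply: all_msupp_in_ideal p_in; first exact: up_closed_meets.
apply/allP => _ /gs_vars [j Aj ->]; rewrite msuppX /= andbT.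
by apply/existsP; exists j; rewrite Aj mnm1E eqxx.
Qed.

Lemma prod_idealX m : I 'X_[m] <-> meets_blocks F m.
Proof.
split=> [[gs [gs_prod Xm_in]] | /(meets_blocks_sel_le F_disjoint) [a sa le_am]].
  apply/forallP => i; suff : all (meets (F i)) (msupp ('X_[m] : S)) by rewrite msuppX /= andbT.
  apply: all_msupp_in_ideal Xm_in; first exact: up_closed_meets.
  apply/allP => _ /gs_prod [g [PF_g ->]]; rewrite (bigD1 i) //= mulrC.
  by apply: all_msuppMl; [exact: up_closed_meets | exact: all_msupp_PF].
exists [:: 'X_[sel_mnm a]]; split=> [g | ].
  rewrite mem_seq1 => /eqP ->; exists (fun i => 'X_(a i)); split; last by rewrite mprodXE.
  move=> i; exists [:: 'X_(a i)]; split; last by apply: in_ideal_mem; rewrite mem_seq1.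
  by move=> g'; rewrite mem_seq1 => /eqP ->; exists (a i).
rewrite -(submK le_am) mpolyXD; apply/in_idealMl/in_ideal_mem.
by rewrite mem_seq1.
Qed.

Lemma min_monomial_gen_prod m :
  min_monomial_gen I m <-> exists2 a, selects F a & m = sel_mnm a.
Proof.
split=> [[/prod_idealX /(meets_blocks_sel_le F_disjoint) [a sa le_am] m_min] | [a sa ->]].
  exists a => //; symmetry; apply: m_min; last exact/forallP/mnm_lepP.
  exact/prod_idealX/(meets_blocks_sel F_disjoint).
split=> [|m' /prod_idealX meets_m' /forallP /mnm_lepP le_m'a].
  exact/prod_idealX/(meets_blocks_sel F_disjoint).
exact: (meets_blocks_le_sel F_disjoint sa).
Qed.

End ProductIdeal.

Section LexSortedGenerators.
Variables (K : fieldType) (n s : nat) (F : 'I_s -> {set 'I_n}) (fs : seq 'X_{1..n}).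
Hypothesis F_disjoint : forall i j, i != j -> [disjoint F i & F j].
Hypothesis fs_sorted : sorted (@lex_gt n) fs.
Hypothesis fs_gens :
  forall m, m \in fs <-> min_monomial_gen (prod_ideal (fun i => @PF K n (F i))) m.
Local Notation S := {mpoly K[n]}.
Local Open Scope ring_scope.

Lemma mem_fs m : m \in fs <-> exists2 a, selects F a & m = sel_mnm a.
Proof. by rewrite fs_gens; apply: min_monomial_gen_prod. Qed.

Lemma size_fs k : (forall i, #|F i| = k) -> size fs = (k ^ s)%N.
Proof.
move=> card_F; rewrite -(card_family_const card_F).
rewrite -(size_image (fun a : {ffun 'I_s -> 'I_n} => sel_mnm a)).
apply/perm_size/uniq_perm.
- exact: sorted_uniq (@lex_gt_trans n) (@lex_gt_irr n) _ fs_sorted.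
- rewrite map_inj_in_uniq ?enum_uniq // => a b.
  rewrite !mem_enum => /familyP sa /familyP sb eq_ab.
  by apply/ffunP => i; apply: (sel_mnm_le_eq F_disjoint sb sa); rewrite eq_ab lepm_refl.
move=> m; apply/idP/imageP => [/mem_fs [a sa ->] | [a /familyP sa ->]].
  exists [ffun i => a i]; first by apply/familyP => i; rewrite ffunE.
  by apply: eq_bigr => i _; rewrite ffunE.
by apply/mem_fs; exists a.
Qed.

Lemma mem_take_fs p u :
  (p < size fs)%N -> (u \in take p fs) = (u \in fs) && lex_gt u (nth 0%MM fs p).
Proof. exact: (mem_take_sorted 0%MM (@lex_gt_trans n) (@lex_gt_irr n) u fs_sorted). Qed.

Lemma colon_take_fs p a : (p < size fs)%N -> selects F a -> nth 0%MM fs p = sel_mnm a ->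
  generates [seq 'X_j : S | j <- enum (colon_vars F a)]
            (colon (in_ideal [seq 'X_[u] | u <- take p fs]) 'X_[sel_mnm a]).
Proof.
move=> lt_p sa fs_p; apply: generates_colon_monomial => m.
apply/hasP/hasP => [[u] | [l]].
  rewrite mem_take_fs // fs_p.
  move=> /andP [/mem_fs [b sb ->] lt_ba] le_b.
  have [|l Vl ml] := (colon_varsP F_disjoint m sa).1; first by exists b; rewrite // lt_ba.
  by exists l; rewrite ?mem_enum ?lep1mP.
rewrite mem_enum lep1mP => Vl ml.
have [|b sb /andP [lt_ba le_b]] := (colon_varsP F_disjoint m sa).2; first by exists l.
exists (sel_mnm b) => //.
by rewrite mem_take_fs // fs_p lt_ba andbT; apply/mem_fs; exists b.
Qed.

Lemma colon_prefix_vars i : (1 <= i <= size fs)%N -> exists2 a, selects F a &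
  nth 0%MM fs i.-1 = sel_mnm a /\
  generates [seq 'X_j : S | j <- enum (colon_vars F a)]
    (colon (in_ideal [seq 'X_[nth 0%MM fs j.-1] | j <- iota 1 i.-1]) 'X_[nth 0%MM fs i.-1]).
Proof.
case/andP=> i_gt0 le_i; have lt_i : (i.-1 < size fs)%N by rewrite prednK.
have [a sa fs_i] := (mem_fs _).1 (mem_nth 0%MM lt_i).
exists a => //; split=> //; rewrite fs_i.
have -> : [seq 'X_[nth 0%MM fs j.-1] : S | j <- iota 1 i.-1] = [seq 'X_[u] | u <- take i.-1 fs].
  by rewrite -(map_nth_iota0 0%MM (ltnW lt_i)) (iotaDl 1 0) -!map_comp.
exact: colon_take_fs.
Qed.

Lemma colon_vars_last a : (0 < size fs)%N -> selects F a ->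
  nth 0%MM fs (size fs).-1 = sel_mnm a -> colon_vars F a = \bigcup_i (F i :\ a i).
Proof.
move=> fs_n0 sa fs_last; apply: colon_vars_lex_min => // b sb; apply/negP => lt_ab.
have fs_b : sel_mnm b \in fs by apply/mem_fs; exists b.
suff : ((size fs).-1 < index (sel_mnm b) fs)%N by rewrite prednK // leqNgt index_mem fs_b.
apply: (sorted_nth_rel_ltn (x0 := 0%MM) (@lex_gt_trans n) (@lex_gt_irr n) fs_sorted).
- by rewrite prednK.
- by rewrite index_mem.
- by rewrite nth_index // fs_last.
Qed.

End LexSortedGenerators.

Unset Implicit Arguments. Set Strict Implicit. Set Printing Implicit Defensive.
Local Open Scope ring_scope.

Theorem lemma3p1 (K : fieldType) (n s k : nat) (F : 'I_s -> {set 'I_n})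
    (fs : seq 'X_{1..n}) :
  (1 < k)%N ->
  (forall i, #|F i| = k) ->
  (forall i j, i != j -> [disjoint F i & F j]) ->
  (* f_1, ..., f_N are exactly the minimal monomial generators of
     P_{F_1} ... P_{F_s}, listed in strictly decreasing lex order *)
  sorted (@lex_gt n) fs ->
  (forall m, m \in fs <-> min_monomial_gen (@prod_ideal K n s (fun i => @PF K n (F i))) m) ->
  let f := fun i : nat => ('X_[nth 0%MM fs i.-1] : {mpoly K[n]}) in
  let C := fun i : nat => colon (in_ideal [seq f j | j <- iota 1 i.-1]) (f i) in
  [/\ size fs = (k ^ s)%N,
      (forall i, (2 <= i <= size fs)%N ->
         forall ni, min_num_homog_gens (C i) ni -> (ni <= (k - 1) * s)%N),
      min_num_homog_gens (C (size fs)) ((k - 1) * s)%N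
    & forall i, (1 <= i <= size fs)%N -> gen_by_linear_forms (C i)].
Proof.
move=> k_gt1 card_F F_disjoint fs_sorted fs_gens f C.
have colon_gens := colon_prefix_vars F_disjoint fs_sorted fs_gens.
have size_fsE := size_fs F_disjoint fs_sorted fs_gens card_F.
have size_gt0 : (0 < size fs)%N by rewrite size_fsE expn_gt0 (leq_trans _ k_gt1).
split=> //.
- move=> i /andP [lt_1i le_i] ni [_ ni_min].
  have [|a sa [_ gen_a]] := colon_gens i; first by rewrite le_i (ltnW lt_1i).
  apply: leq_trans (ni_min _ _ gen_a) _; first by move=> g /vars_dhomog1; exists 1%N.
  rewrite size_map -cardE -(card_bigcup_blocksD1 F_disjoint card_F sa).
  exact/subset_leq_card/colon_vars_sub.
- have [|a sa [fs_last gen_a]] := colon_gens (size fs); first by rewrite size_gt0 leqnn.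
  rewrite -(card_bigcup_blocksD1 F_disjoint card_F sa).
  rewrite -(colon_vars_last F_disjoint fs_sorted fs_gens size_gt0 sa fs_last).
  exact: min_num_homog_gens_vars.
- move=> i /colon_gens [a _ [_ gen_a]].
  by exists [seq 'X_j | j <- enum (colon_vars F a)]; split=> // g /vars_dhomog1.
Qed.
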